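(* Let $0<q<\infty$ and $\frac{q}{q+1}<p<\infty$, and let $r=\frac{pq}{pq+p-q}$. Then $$\frac{p\sin_{p,q}x}{x}+\frac{r\operatorname{tam}_{p,q}x}{x}>p+r \quad \text{for all } x\in\left(0,\tfrac{\pi_{p,q}}{2}\right),$$ and $$\frac{p\sinh_{p,q}x}{x}+\frac{r\operatorname{tamh}_{p,q}x}{x}>p+r \quad \text{for all } x\in\left(0,\tfrac{\pi_{r,q}}{2}\right).$$
   Context: For $0<q<\infty$ and $\frac{q}{q+1}<p<\infty$: let $F_{p,q}(y)=\int_0^y (1-t^q)^{-1/p}\,dt$ for $y\in[0,1)$ and $\pi_{p,q}=2\int_0^1(1-t^q)^{-1/p}\,dt\in(0,\infty]$ (it equals $\infty$ when $p\le 1$). The function $\sin_{p,q}:[0,\pi_{p,q}/2)\to[0,1)$ is the inverse of $F_{p,q}$, $\cos_{p,q}x=\frac{d}{dx}\sin_{p,q}x$, and $\operatorname{tam}_{p,q}x=\sin_{p,q}x/\cos_{p,q}^{p/q}x$. Let $G_{p,q}(y)=\int_0^y(1+t^q)^{-1/p}\,dt$ for $y\in[0,\infty)$; its range is $[0,\pi_{r,q}/2)$ with $r=\frac{pq}{pq+p-q}$ (which also satisfies $\frac{q}{q+1}<r<\infty$). The function $\sinh_{p,q}:[0,\pi_{r,q}/2)\to[0,\infty)$ is the inverse of $G_{p,q}$, $\cosh_{p,q}x=\frac{d}{dx}\sinh_{p,q}x$, and $\operatorname{tamh}_{p,q}x=\sinh_{p,q}x/\cosh_{p,q}^{p/q}x$.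 *)

From Stdlib Require Import Reals ClassicalEpsilon.
From Coquelicot Require Import Coquelicot.
Open Scope R_scope.

(* real power t^a for t >= 0, with the convention 0^a = 0 *)
Definition rpow (t a : R) : R := if Req_EM_T t 0 then 0 else Rpower t a.

Definition F_pq (p q y : R) : R :=
  RInt (fun t => rpow (1 - rpow t q) (- / p)) 0 y.

Definition G_pq (p q y : R) : R :=
  RInt (fun t => rpow (1 + rpow t q) (- / p)) 0 y.

(* pi_{p,q} = 2 \int_0^1 (1-t^q)^{-1/p} dt in (0, +oo]; since the integrand is
   positive, the (possibly improper) integral equals sup_{0<=y<1} F_{p,q}(y). *)
Definition pi_pq (p q : R) : Rbar :=
  Rbar_mult 2 (Lub_Rbar (fun z => exists y, 0 <= y < 1 /\ z = F_pq p q y)).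

Definition sin_pq (p q x : R) : R :=
  epsilon (inhabits 0) (fun y => 0 <= y < 1 /\ F_pq p q y = x).

Definition cos_pq (p q x : R) : R := Derive (sin_pq p q) x.

Definition tam_pq (p q x : R) : R :=
  sin_pq p q x / rpow (cos_pq p q x) (p / q).

Definition sinh_pq (p q x : R) : R :=
  epsilon (inhabits 0) (fun y => 0 <= y /\ G_pq p q y = x).

Definition cosh_pq (p q x : R) : R := Derive (sinh_pq p q) x.

Definition tamh_pq (p q x : R) : R :=
  sinh_pq p q x / rpow (cosh_pq p q x) (p / q).

(* Put s = sin_{p,q} x, so that x = F(s) = \int_0^s (1 - t^q)^{-1/p} dt, cos_{p,q} x = (1 - s^q)^{1/p}
   and tam_{p,q} x = s (1 - s^q)^{-1/q}.  The inequality becomes (p + r) F(s) < p s + r s (1 - s^q)^{-1/q}.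
   Both sides vanish at s = 0, and the derivative of the right-hand side is p + r u with
   u = (1 - s^q)^{-(q+1)/q}, while that of the left-hand side is (p + r) u^l with l = r / (p + r),
   because 1/p + 1/r = 1 + 1/q.  So the claim follows from the strict weighted AM-GM inequality
   u^l < l u + (1 - l) for u <> 1.  The hyperbolic case is the same computation with 1 + t^q; that
   sinh_{p,q} is defined on (0, pi_{r,q}/2) comes from the substitution y |-> y (1 - y^q)^{-1/q},
   which carries F_{r,q} onto G_{p,q}. *)

From Stdlib Require Import Reals Ranalysis5 Lra ClassicalEpsilon.
From Coquelicot Require Import Coquelicot.
Open Scope R_scope.

Lemma rpow_eq_exp u a : 0 < u -> rpow u a = exp (a * ln u).
Proof. intros hu; unfold rpow; destruct (Req_EM_T u 0); [lra | reflexivity]. Qed.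

Lemma rpow_gt0 u a : 0 < u -> 0 < rpow u a.
Proof. intros hu; rewrite rpow_eq_exp by exact hu; apply exp_pos. Qed.

Lemma continuous_rpow u a : 0 < u -> continuous (fun v => rpow v a) u.
Proof.
  intros hu; apply (@ex_derive_continuous R_AbsRing R_NormedModule).
  apply (ex_derive_ext_loc (fun v => exp (a * ln v))).
  - apply (filter_imp (fun v => 0 < v)); [|exact (open_gt 0 u hu)].
    intros v hv; symmetry; apply rpow_eq_exp, hv.
  - auto_derive; exact hu.
Qed.

Lemma continuity_pt_of_is_derive f x l : is_derive f x l -> continuity_pt f x.
Proof.
  intros hd; apply continuity_pt_filterlim.
  apply (@ex_derive_continuous R_AbsRing R_NormedModule); exists l; exact hd.
Qed.

Lemma continuous_mult_const_l c (f : R -> R) x : continuous f x -> continuous (fun t => c * f t) x.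
Proof. apply (continuous_mult (fun _ => c) f), continuous_const. Qed.

(* Stdlib's [MVT], unlike Coquelicot's [MVT_gen], puts the intermediate point in the open interval. *)
Lemma lt_of_derive_pos (f df : R -> R) a b : a < b ->
  (forall x, a < x < b -> is_derive f x (df x) /\ 0 < df x) ->
  (forall x, a <= x <= b -> continuity_pt f x) -> f a < f b.
Proof.
  intros hab hd hc.
  pose (pr c (P : a < c < b) := exist (derivable_pt_lim f c) (df c)
          (proj1 (is_derive_Reals f c (df c)) (proj1 (hd c P)))).
  destruct (MVT f id a b pr (fun c _ => derivable_pt_id c) hab hc
              (fun c _ => derivable_continuous_pt id c (derivable_pt_id c))) as [c [P e]].
  rewrite derive_pt_id in e; simpl in e; unfold id in e.
  pose proof (proj2 (hd c P)); nra.
Qed.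

Lemma exp_lt_convex_comb l z : 0 < l < 1 -> z <> 0 -> exp (l * z) < l * exp z + (1 - l).
Proof.
  intros hl hz.
  (* tangent-line bounds for [exp] at [l * z], taken at [z] and at [0] *)
  assert (h1 : 1 + (1 - l) * z < exp ((1 - l) * z)).
  { apply exp_ineq1; intros h; apply Rmult_integral in h; lra. }
  pose proof (exp_ineq1_le (- l * z)) as h2.
  assert (h : 1 < l * exp ((1 - l) * z) + (1 - l) * exp (- l * z)) by nra.
  replace (l * exp z + (1 - l)) with
    (exp (l * z) * (l * exp ((1 - l) * z) + (1 - l) * exp (- l * z))).
  - pose proof (exp_pos (l * z)); nra.
  - rewrite Rmult_plus_distr_l, <- Rmult_assoc, (Rmult_comm _ l), Rmult_assoc, <- exp_plus.
    rewrite <- Rmult_assoc, (Rmult_comm _ (1 - l)), Rmult_assoc, <- exp_plus.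
    replace (l * z + (1 - l) * z) with z by ring; replace (l * z + - l * z) with 0 by ring.
    rewrite exp_0; ring.
Qed.

Section RightInverse.
Variables (f df g : R -> R) (b : Rbar) (ub : R).
Hypothesis hf : forall y, 0 < y -> Rbar_lt y b -> is_derive f y (df y) /\ 0 < df y.
Hypothesis hg : forall x, 0 < x <= ub -> 0 < g x /\ Rbar_lt (g x) b /\ f (g x) = x.

Lemma incr_of_derive_pos y z : 0 < y -> y < z -> Rbar_lt z b -> f y < f z.
Proof.
  intros hy hyz hz.
  assert (hb : forall t, y <= t <= z -> Rbar_lt t b)
    by (intros t ht; apply (Rbar_le_lt_trans _ z); [simpl; lra | exact hz]).
  apply (lt_of_derive_pos f df y z hyz).
  - intros t ht; apply hf; [lra | apply hb; lra].
  - intros t ht; apply (continuity_pt_of_is_derive f t (df t)), hf; [lra | apply hb, ht].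
Qed.

Lemma right_inverse_incr x y : 0 < x -> x < y -> y <= ub -> g x < g y.
Proof.
  intros hx hxy hy.
  destruct (hg x) as [gx [bx ex]]; [lra |].
  destruct (hg y) as [gy [b_y ey]]; [lra |].
  destruct (Rlt_le_dec (g x) (g y)) as [| [hlt | heq]]; [assumption | |].
  - pose proof (incr_of_derive_pos (g y) (g x) gy hlt bx); lra.
  - rewrite <- heq in ex; lra.
Qed.

Lemma is_derive_right_inverse x : 0 < x < ub -> is_derive g x (/ df (g x)).
Proof.
  intros hx; set (lb := x / 2).
  assert (hlb : 0 < lb < x) by (unfold lb; lra).
  assert (ginc : forall y z, lb <= y -> y <= z -> z <= ub -> g y <= g z).
  { intros y z hy hyz hz; destruct (Req_dec y z) as [-> | hne]; [lra |].
    left; apply right_inverse_incr; lra. }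
  destruct (hg lb) as [glb [blb elb]]; [lra |].
  destruct (hg ub) as [gub [bub eub]]; [lra |].
  assert (hdom : forall a, g lb <= a <= g ub -> is_derive f a (df a) /\ 0 < df a).
  { intros a ha; apply hf; [lra | apply (Rbar_le_lt_trans _ (g ub)); [simpl; lra | exact bub]]. }
  pose (Prf a (ha : g lb <= a <= g ub) := exist (derivable_pt_lim f a) (df a)
          (proj1 (is_derive_Reals f a (df a)) (proj1 (hdom a ha)))).
  assert (hgx : g lb <= g x <= g ub) by (split; apply ginc; lra).
  assert (gcont : continuity_pt g x).
  { apply (continuity_pt_recip_interv f g (g lb) (g ub)).
    - apply right_inverse_incr; lra.
    - intros a c ha hac hc; apply incr_of_derive_pos; [lra | exact hac |].
      apply (Rbar_le_lt_trans _ (g ub)); [simpl; lra | exact bub].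
    - intros y hy1 hy2; rewrite elb in hy1; rewrite eub in hy2; unfold comp, id; apply hg; lra.
    - intros y hy1 hy2; rewrite elb in hy1; rewrite eub in hy2; split; apply ginc; lra.
    - intros a ha; apply (continuity_pt_of_is_derive f a (df a)), hdom, ha.
    - rewrite elb, eub; lra. }
  apply is_derive_Reals; rewrite <- Rdiv_1_l.
  apply (derivable_pt_lim_recip_interv f g lb ub x Prf gcont ltac:(lra) ltac:(lra) hgx).
  - intros y hy; unfold comp, id; apply hg; lra.
  - simpl; pose proof (proj2 (hdom _ hgx)); lra.
Qed.

End RightInverse.

Definition abs_pow (q t : R) : R := rpow (Rabs t) q.

Lemma abs_pow_0 q : abs_pow q 0 = 0.
Proof. unfold abs_pow, rpow; rewrite Rabs_R0; destruct (Req_EM_T 0 0); lra. Qed.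

Lemma abs_pow_eq_exp q t : t <> 0 -> abs_pow q t = exp (q * ln (Rabs t)).
Proof. intros ht; apply rpow_eq_exp, Rabs_pos_lt, ht. Qed.

Lemma abs_pow_gt0 q t : t <> 0 -> 0 < abs_pow q t.
Proof. intros ht; apply rpow_gt0, Rabs_pos_lt, ht. Qed.

Lemma abs_pow_ge0 q t : 0 <= abs_pow q t.
Proof.
  destruct (Req_dec t 0) as [-> | ht]; [rewrite abs_pow_0; lra |].
  left; apply abs_pow_gt0, ht.
Qed.

Lemma abs_pow_eq_exp_pos q t : 0 < t -> abs_pow q t = exp (q * ln t).
Proof. intros ht; rewrite abs_pow_eq_exp, Rabs_pos_eq by lra; reflexivity. Qed.

Section AbsPow.
Variable q : R.
Hypothesis hq : 0 < q.

Lemma abs_pow_le a b : Rabs a <= Rabs b -> abs_pow q a <= abs_pow q b.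
Proof.
  intros hab; destruct (Req_dec a 0) as [-> | ha]; [rewrite abs_pow_0; apply abs_pow_ge0 |].
  assert (0 < Rabs a) by (apply Rabs_pos_lt, ha).
  assert (hb : b <> 0) by (intros ->; rewrite Rabs_R0 in hab; lra).
  rewrite !abs_pow_eq_exp by assumption.
  destruct (Req_dec (Rabs a) (Rabs b)) as [-> | hne]; [lra |].
  left; apply exp_increasing, Rmult_lt_compat_l; [exact hq |].
  apply ln_increasing; lra.
Qed.

Lemma abs_pow_lt1 t : Rabs t < 1 -> abs_pow q t < 1.
Proof.
  intros ht; destruct (Req_dec t 0) as [-> | h0]; [rewrite abs_pow_0; lra |].
  rewrite abs_pow_eq_exp, <- exp_0 by exact h0; apply exp_increasing.
  assert (0 < Rabs t) by (apply Rabs_pos_lt, h0).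
  assert (ln (Rabs t) < 0) by (rewrite <- ln_1; apply ln_increasing; lra).
  nra.
Qed.

Lemma continuous_abs_pow t : continuous (abs_pow q) t.
Proof.
  destruct (Req_dec t 0) as [-> | ht].
  - apply filterlim_locally; intros eps.
    set (d := exp (ln (eps / 2) / q)).
    exists (mkposreal d (exp_pos _)); intros y hy.
    change (Rabs (y - 0) < d) in hy; change (Rabs (abs_pow q y - abs_pow q 0) < eps).
    rewrite abs_pow_0, Rminus_0_r in *; rewrite Rabs_pos_eq by apply abs_pow_ge0.
    assert (hd : abs_pow q d = eps / 2).
    { unfold d; rewrite abs_pow_eq_exp by apply Rgt_not_eq, exp_pos.
      rewrite Rabs_pos_eq by (left; apply exp_pos).
      rewrite ln_exp; replace (q * (ln (eps / 2) / q)) with (ln (eps / 2)) by (field; lra).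
      apply exp_ln; pose proof (cond_pos eps); lra. }
    assert (abs_pow q y <= abs_pow q d).
    { apply abs_pow_le; rewrite (Rabs_pos_eq d) by (left; apply exp_pos); lra. }
    pose proof (cond_pos eps); lra.
  - apply (continuous_comp Rabs (fun v => rpow v q)).
    + exact (@continuous_abs R_AbsRing t).
    + apply continuous_rpow, Rabs_pos_lt, ht.
Qed.

End AbsPow.

(* On [0, oo), [prim (-1) q p] is [F_pq p q] and [prim 1 q p] is [G_pq p q]; the absolute value
   keeps the integrand continuous around [0].
   [tam_map (-1) q] and [tam_map 1 q] express [tam_pq] and [tamh_pq] through [sin_pq] and [sinh_pq]. *)
Definition admissible (sg q t : R) : Prop := 0 < 1 + sg * abs_pow q t.

Definition kernel (sg q a t : R) : R := rpow (1 + sg * abs_pow q t) (- / a).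

Definition prim (sg q a y : R) : R := RInt (kernel sg q a) 0 y.

Definition tam_map (sg q y : R) : R := y * kernel sg q q y.

Lemma admissible_0 sg q : admissible sg q 0.
Proof. unfold admissible; rewrite abs_pow_0; lra. Qed.

Lemma admissible_1 q t : admissible 1 q t.
Proof. pose proof (abs_pow_ge0 q t); unfold admissible; lra. Qed.

Section Kernel.
Variable q : R.
Hypothesis hq : 0 < q.

Lemma admissible_le sg t y : Rabs t <= Rabs y -> admissible sg q y -> admissible sg q t.
Proof.
  unfold admissible; intros hty hy.
  pose proof (abs_pow_le q hq t y hty); pose proof (abs_pow_ge0 q t).
  destruct (Rle_dec 0 sg); nra.
Qed.

Lemma admissible_m1 t : Rabs t < 1 -> admissible (-1) q t.
Proof. intros ht; pose proof (abs_pow_lt1 q hq t ht); unfold admissible; lra. Qed.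

Lemma continuous_base sg t : continuous (fun t => 1 + sg * abs_pow q t) t.
Proof.
  apply (continuous_plus (fun _ => 1) (fun t => sg * abs_pow q t)); [apply continuous_const |].
  apply continuous_mult_const_l, continuous_abs_pow, hq.
Qed.

Lemma admissible_nbhs sg y : admissible sg q y -> locally y (admissible sg q).
Proof. intros hy; apply (continuous_base sg y (fun z => 0 < z)), (open_gt 0 _ hy). Qed.

Lemma kernel_eq_exp sg a t : admissible sg q t ->
  kernel sg q a t = exp (- / a * ln (1 + sg * abs_pow q t)).
Proof. apply rpow_eq_exp. Qed.

Lemma kernel_gt0 sg a t : admissible sg q t -> 0 < kernel sg q a t.
Proof. apply rpow_gt0. Qed.

Lemma continuous_kernel sg a t : admissible sg q t -> continuous (kernel sg q a) t.
Proof.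
  intros ht; apply (continuous_comp (fun t => 1 + sg * abs_pow q t) (fun v => rpow v (- / a))).
  - apply continuous_base.
  - apply continuous_rpow, ht.
Qed.

Lemma prim_0 sg a : prim sg q a 0 = 0.
Proof. unfold prim; rewrite RInt_point; reflexivity. Qed.

Lemma is_derive_prim sg a y : admissible sg q y -> is_derive (prim sg q a) y (kernel sg q a y).
Proof.
  intros hy; apply (is_derive_RInt (kernel sg q a) (prim sg q a) 0).
  - apply (filter_imp (admissible sg q)); [| apply admissible_nbhs, hy].
    intros b hb; apply (RInt_correct (V := R_CompleteNormedModule)).
    apply (ex_RInt_continuous (V := R_CompleteNormedModule)).
    intros z hz; apply continuous_kernel, (admissible_le sg z b); [| exact hb].
    revert hz; unfold Rmin, Rmax, Rabs.
    destruct (Rle_dec 0 b), (Rcase_abs z), (Rcase_abs b); lra.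
  - apply continuous_kernel, hy.
Qed.

Lemma continuous_prim sg a y : admissible sg q y -> continuous (prim sg q a) y.
Proof.
  intros hy; apply (@ex_derive_continuous R_AbsRing R_NormedModule).
  eexists; apply is_derive_prim; assumption.
Qed.

Lemma prim_onto sg a x Y : 0 <= Y -> admissible sg q Y -> 0 < x <= prim sg q a Y ->
  exists y, 0 < y <= Y /\ prim sg q a y = x.
Proof.
  intros hY hadm hx.
  assert (hY0 : 0 < Y) by (destruct hY as [| <-]; [assumption | rewrite prim_0 in hx; lra]).
  destruct (Req_dec x (prim sg q a Y)) as [-> | hne]; [exists Y; split; [lra | reflexivity] |].
  destruct (IVT_interv (fun t => prim sg q a t - x) 0 Y) as [y [hy e]].
  - intros t ht; apply continuity_pt_minus; [| apply continuity_pt_const; intros ? ?; reflexivity].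
    apply continuity_pt_filterlim, continuous_prim.
    apply (admissible_le sg t Y); [rewrite !Rabs_pos_eq; lra | exact hadm].
  - exact hY0.
  - rewrite prim_0; lra.
  - lra.
  - exists y; split; [| lra].
    destruct hy as [[| <-] ?]; [lra | rewrite prim_0 in e; lra].
Qed.

Lemma tam_map_0 sg : tam_map sg q 0 = 0.
Proof. apply Rmult_0_l. Qed.

Lemma is_derive_tam_map sg t : 0 < t -> admissible sg q t ->
  is_derive (tam_map sg q) t (kernel sg q (q / (q + 1)) t).
Proof.
  intros ht hadm.
  apply (is_derive_ext_loc (fun t => t * exp (- / q * ln (1 + sg * exp (q * ln t))))).
  { apply (filter_imp (fun u => 0 < u /\ admissible sg q u)).
    - intros u [hu hau]; unfold tam_map; rewrite kernel_eq_exp, abs_pow_eq_exp_pos by assumption.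
      reflexivity.
    - apply filter_and; [apply (open_gt 0 t ht) | apply admissible_nbhs; assumption]. }
  rewrite kernel_eq_exp by exact hadm.
  unfold admissible in hadm; rewrite abs_pow_eq_exp_pos in * by exact ht.
  auto_derive; [repeat split; assumption |].
  set (w := exp (q * ln t)) in *; set (u := 1 + sg * w) in *.
  replace (- / (q / (q + 1)) * ln u) with (- / q * ln u + - ln u) by (field; lra).
  rewrite exp_plus, exp_Ropp, exp_ln by exact hadm.
  unfold u in *; field; split; lra.
Qed.

Lemma continuous_tam_map sg t : admissible sg q t -> continuous (tam_map sg q) t.
Proof.
  intros ht; apply (continuous_mult (fun t => t) (kernel sg q q)).
  - apply continuous_id.
  - apply continuous_kernel; assumption.
Qed.

Lemma div_rpow_inv_kernel sg p s : admissible sg q s -> p <> 0 ->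
  s / rpow (/ kernel sg q p s) (p / q) = tam_map sg q s.
Proof.
  intros hs hp; unfold tam_map; rewrite !kernel_eq_exp by exact hs.
  rewrite <- exp_Ropp, rpow_eq_exp, ln_exp by apply exp_pos.
  unfold Rdiv; rewrite <- exp_Ropp; f_equal; f_equal; field; lra.
Qed.

Lemma abs_pow_tam_map sg t : 0 < t -> admissible sg q t ->
  abs_pow q (tam_map sg q t) = abs_pow q t / (1 + sg * abs_pow q t).
Proof.
  intros ht hadm; unfold tam_map; rewrite kernel_eq_exp by exact hadm.
  assert (hpos : 0 < t * exp (- / q * ln (1 + sg * abs_pow q t)))
    by (apply Rmult_lt_0_compat; [exact ht | apply exp_pos]).
  rewrite (abs_pow_eq_exp_pos q (t * _)) by exact hpos.
  rewrite ln_mult, ln_exp by (try apply exp_pos; exact ht).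
  replace (q * (ln t + - / q * ln (1 + sg * abs_pow q t)))
    with (q * ln t - ln (1 + sg * abs_pow q t)) by (field; lra).
  unfold Rminus; rewrite exp_plus, exp_Ropp, exp_ln by exact hadm.
  rewrite abs_pow_eq_exp_pos by exact ht; reflexivity.
Qed.

Lemma base_tam_map sg t : 0 < t -> admissible sg q t ->
  1 + - sg * abs_pow q (tam_map sg q t) = / (1 + sg * abs_pow q t).
Proof.
  intros ht hadm; rewrite abs_pow_tam_map by assumption.
  unfold admissible in hadm; field; lra.
Qed.

Lemma admissible_tam_map sg t : 0 <= t -> admissible sg q t -> admissible (- sg) q (tam_map sg q t).
Proof.
  intros ht hadm; destruct (Req_dec t 0) as [-> | h0].
  - rewrite tam_map_0; apply admissible_0.
  - unfold admissible; rewrite base_tam_map by (lra || exact hadm).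
    apply Rinv_0_lt_compat, hadm.
Qed.

Section Exponents.
Variables sg p r : R.
Hypotheses (hp : 0 < p) (hr : 0 < r) (hpr : / p + / r = 1 + / q).

Lemma kernel_lt_comb y : sg <> 0 -> y <> 0 -> admissible sg q y ->
  (p + r) * kernel sg q p y < p + r * kernel sg q (q / (q + 1)) y.
Proof.
  intros hsg hy hadm; rewrite !kernel_eq_exp by exact hadm.
  set (L := ln (1 + sg * abs_pow q y)).
  assert (hL : L <> 0).
  { intros hL0; unfold L in hL0; rewrite <- ln_1 in hL0.
    apply ln_inv in hL0; [| exact hadm | lra].
    assert (hprod : sg * abs_pow q y = 0) by lra.
    apply Rmult_integral in hprod; pose proof (abs_pow_gt0 q y hy); lra. }
  set (l := r / (p + r)); set (z := - / (q / (q + 1)) * L).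
  assert (hz : z <> 0).
  { unfold z; intros h; apply Rmult_integral in h; destruct h as [h | h]; [| lra].
    apply (Rinv_neq_0_compat (q / (q + 1))); [apply Rgt_not_eq, Rdiv_lt_0_compat; lra | lra]. }
  assert (hlz : - / p * L = l * z).
  { assert (hrel : r * (q + 1) * p = (p + r) * q).
    { transitivity (p * q * r * (1 + / q)); [field; lra |].
      rewrite <- hpr; field; split; lra. }
    unfold l, z.
    replace (r / (p + r) * (- / (q / (q + 1)) * L))
      with (- (r * (q + 1) * p) / ((p + r) * q * p) * L) by (field; repeat split; lra).
    rewrite hrel; field; split; lra. }
  assert (hl : 0 < l < 1).
  { unfold l; split; [apply Rdiv_lt_0_compat; lra |].
    apply Rmult_lt_reg_r with (p + r); [lra |]; field_simplify; lra. }
  rewrite hlz; pose proof (exp_lt_convex_comb l z hl hz).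
  replace p with ((p + r) * (1 - l)) at 2 by (unfold l; field; lra).
  replace (r * exp z) with ((p + r) * (l * exp z)) by (unfold l; field; lra).
  nra.
Qed.

Lemma kernel_tam_map t : 0 < t -> admissible sg q t ->
  kernel (- sg) q p (tam_map sg q t) * kernel sg q (q / (q + 1)) t = kernel sg q r t.
Proof.
  intros ht hadm.
  rewrite !kernel_eq_exp by first [exact hadm | apply admissible_tam_map; [lra | exact hadm]].
  rewrite base_tam_map, ln_Rinv, <- exp_plus by (exact ht || exact hadm).
  f_equal; replace (/ r) with (1 + / q - / p) by lra; field; lra.
Qed.

Lemma prim_tam_map y : 0 <= y -> admissible sg q y ->
  prim (- sg) q p (tam_map sg q y) = prim sg q r y.
Proof.
  intros hy hadm.
  assert (hle : forall t, 0 <= t <= y -> admissible sg q t)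
    by (intros t ht; apply (admissible_le sg t y); [rewrite !Rabs_pos_eq; lra | exact hadm]).
  destruct (MVT_gen (fun t => prim (- sg) q p (tam_map sg q t) - prim sg q r t) 0 y (fun _ => 0))
    as [c [_ e]].
  - rewrite Rmin_left, Rmax_right by exact hy; intros t ht.
    rewrite <- (Rminus_diag (kernel sg q r t)).
    apply (is_derive_minus (fun t => prim (- sg) q p (tam_map sg q t))); [| apply is_derive_prim, hle; lra].
    rewrite <- (kernel_tam_map t), Rmult_comm by (lra || apply hle; lra).
    apply (is_derive_comp (prim (- sg) q p) (tam_map sg q)).
    + apply is_derive_prim, admissible_tam_map; [lra | apply hle; lra].
    + apply is_derive_tam_map; [lra | apply hle; lra].
  - rewrite Rmin_left, Rmax_right by exact hy; intros t ht.
    apply continuity_pt_filterlim.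
    apply (continuous_minus (fun t => prim (- sg) q p (tam_map sg q t))).
    + apply (continuous_comp (tam_map sg q) (prim (- sg) q p)).
      * apply continuous_tam_map, hle; lra.
      * apply continuous_prim, admissible_tam_map, hle; lra.
    + apply continuous_prim, hle; lra.
  - rewrite tam_map_0, !prim_0, Rmult_0_l in e; lra.
Qed.

Lemma prim_lt_comb s : sg <> 0 -> 0 < s -> admissible sg q s ->
  (p + r) * prim sg q p s < p * s + r * tam_map sg q s.
Proof.
  intros hsg hs hadm.
  assert (hle : forall t, 0 <= t <= s -> admissible sg q t)
    by (intros t ht; apply (admissible_le sg t s); [rewrite !Rabs_pos_eq; lra | exact hadm]).
  set (H t := p * t + r * tam_map sg q t - (p + r) * prim sg q p t).
  enough (H 0 < H s) by (unfold H in *; rewrite tam_map_0, prim_0 in *; lra).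
  apply (lt_of_derive_pos H
    (fun t => p + r * kernel sg q (q / (q + 1)) t - (p + r) * kernel sg q p t) 0 s hs).
  - intros t ht; split.
    + apply (is_derive_minus (fun t => p * t + r * tam_map sg q t)).
      * apply (is_derive_plus (fun t => p * t)).
        -- auto_derive; [exact I | ring].
        -- apply is_derive_scal, is_derive_tam_map; [lra | apply hle; lra].
      * apply is_derive_scal, is_derive_prim, hle; lra.
    + pose proof (kernel_lt_comb t hsg ltac:(lra) (hle t ltac:(lra))); lra.
  - intros t ht; apply continuity_pt_filterlim.
    apply (continuous_minus (fun t => p * t + r * tam_map sg q t)).
    + apply (continuous_plus (fun t => p * t)).
      * apply continuous_mult_const_l, continuous_id.
      * apply continuous_mult_const_l, continuous_tam_map, hle; lra.
    + apply continuous_mult_const_l, continuous_prim, hle; lra.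
Qed.

End Exponents.

End Kernel.

Lemma F_pq_eq_prim p q y : 0 <= y -> F_pq p q y = prim (-1) q p y.
Proof.
  intros hy; apply RInt_ext; intros t [ht _]; rewrite Rmin_left in ht by exact hy.
  unfold kernel, abs_pow; rewrite (Rabs_pos_eq t) by lra; f_equal; ring.
Qed.

Lemma G_pq_eq_prim p q y : 0 <= y -> G_pq p q y = prim 1 q p y.
Proof.
  intros hy; apply RInt_ext; intros t [ht _]; rewrite Rmin_left in ht by exact hy.
  unfold kernel, abs_pow; rewrite (Rabs_pos_eq t) by lra; f_equal; ring.
Qed.

Lemma Rbar_mult_half_double (L : Rbar) : Rbar_mult (/ 2) (Rbar_mult 2 L) = L.
Proof.
  destruct L as [L | |]; [simpl; f_equal; field | |].
  - rewrite (Rbar_mult_comm 2), (is_Rbar_mult_unique _ 2 p_infty), Rbar_mult_comm;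
      apply is_Rbar_mult_p_infty_pos || (apply is_Rbar_mult_unique, is_Rbar_mult_p_infty_pos); simpl; lra.
  - rewrite (Rbar_mult_comm 2), (is_Rbar_mult_unique _ 2 m_infty), Rbar_mult_comm;
      apply is_Rbar_mult_m_infty_pos || (apply is_Rbar_mult_unique, is_Rbar_mult_m_infty_pos); simpl; lra.
Qed.

Lemma lt_half_pi_pq_lt_F_pq p q (x : R) : Rbar_lt x (Rbar_mult (/ 2) (pi_pq p q)) ->
  exists y, 0 <= y < 1 /\ x < F_pq p q y.
Proof.
  unfold pi_pq; rewrite Rbar_mult_half_double; intros hx.
  apply NNPP; intros hn.
  assert (hub : is_ub_Rbar (fun z => exists y, 0 <= y < 1 /\ z = F_pq p q y) x).
  { intros z [y [hy ->]]; simpl; apply Rnot_lt_le; intros hlt; apply hn; exists y; split; assumption. }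
  apply (Rbar_lt_not_le _ _ hx), (proj2 (Lub_Rbar_correct _) x hub).
Qed.

Lemma sin_pq_spec p q x y0 : 0 < q -> 0 < x -> 0 <= y0 < 1 -> x <= F_pq p q y0 ->
  0 < sin_pq p q x < 1 /\ prim (-1) q p (sin_pq p q x) = x.
Proof.
  intros hq hx hy0 hxy; rewrite F_pq_eq_prim in hxy by lra.
  destruct (prim_onto q hq (-1) p x y0) as [y [hy e]];
    [lra | apply admissible_m1; [exact hq | rewrite Rabs_pos_eq; lra] | lra |].
  assert (ex : exists y, 0 <= y < 1 /\ F_pq p q y = x)
    by (exists y; rewrite F_pq_eq_prim; [split; [lra | exact e] | lra]).
  destruct (epsilon_spec (inhabits 0) _ ex) as [hs es].
  change (epsilon _ _) with (sin_pq p q x) in hs, es.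
  rewrite F_pq_eq_prim in es by lra.
  split; [| exact es].
  destruct hs as [[| hs0] ?]; [lra | rewrite <- hs0, prim_0 in es; lra].
Qed.

Lemma cos_pq_eq p q (x : R) : 0 < q -> 0 < x -> Rbar_lt x (Rbar_mult (/ 2) (pi_pq p q)) ->
  cos_pq p q x = / kernel (-1) q p (sin_pq p q x).
Proof.
  intros hq hx hX; destruct (lt_half_pi_pq_lt_F_pq p q x hX) as [y0 [hy0 hxy]].
  apply is_derive_unique.
  apply (is_derive_right_inverse (prim (-1) q p) (kernel (-1) q p) (sin_pq p q) 1 (F_pq p q y0));
    [| | lra].
  - intros y hy hy1; assert (hadm : admissible (-1) q y)
      by (apply admissible_m1; [exact hq | simpl in hy1; rewrite Rabs_pos_eq; lra]).
    split; [apply is_derive_prim | apply kernel_gt0]; assumption.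
  - intros x' hx'; destruct (sin_pq_spec p q x' y0) as [[hs0 hs1] e]; [exact hq | lra | exact hy0 | lra |].
    split; [| split]; assumption.
Qed.

Lemma lt_half_pi_pq_lt_G_pq p q r (x : R) : 0 < q -> 0 < p -> / p + / r = 1 + / q ->
  Rbar_lt x (Rbar_mult (/ 2) (pi_pq r q)) -> exists Y, 0 <= Y /\ x < G_pq p q Y.
Proof.
  intros hq hp hpr hX; destruct (lt_half_pi_pq_lt_F_pq r q x hX) as [y0 [hy0 hxy]].
  assert (hadm : admissible (-1) q y0) by (apply admissible_m1; [exact hq | rewrite Rabs_pos_eq; lra]).
  exists (tam_map (-1) q y0); split.
  - unfold tam_map; apply Rmult_le_pos; [lra | left; apply kernel_gt0, hadm].
  - rewrite G_pq_eq_prim by (unfold tam_map; apply Rmult_le_pos; [lra | left; apply kernel_gt0, hadm]).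
    replace 1 with (- -1) by ring.
    rewrite (prim_tam_map q hq (-1) p r hp hpr y0) by (lra || exact hadm).
    rewrite <- F_pq_eq_prim by lra; exact hxy.
Qed.

Lemma sinh_pq_spec p q x Y : 0 < q -> 0 < x -> 0 <= Y -> x <= G_pq p q Y ->
  0 < sinh_pq p q x /\ prim 1 q p (sinh_pq p q x) = x.
Proof.
  intros hq hx hY hxY; rewrite G_pq_eq_prim in hxY by exact hY.
  destruct (prim_onto q hq 1 p x Y) as [y [hy e]]; [exact hY | apply admissible_1 | lra |].
  assert (ex : exists y, 0 <= y /\ G_pq p q y = x)
    by (exists y; rewrite G_pq_eq_prim; [split; [lra | exact e] | lra]).
  destruct (epsilon_spec (inhabits 0) _ ex) as [hs es].
  change (epsilon _ _) with (sinh_pq p q x) in hs, es.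
  rewrite G_pq_eq_prim in es by exact hs.
  split; [| exact es].
  destruct hs as [| hs0]; [lra | rewrite <- hs0, prim_0 in es; lra].
Qed.

Lemma cosh_pq_eq p q r (x : R) : 0 < q -> 0 < p -> / p + / r = 1 + / q -> 0 < x ->
  Rbar_lt x (Rbar_mult (/ 2) (pi_pq r q)) -> cosh_pq p q x = / kernel 1 q p (sinh_pq p q x).
Proof.
  intros hq hp hpr hx hX; destruct (lt_half_pi_pq_lt_G_pq p q r x hq hp hpr hX) as [Y [hY hxY]].
  apply is_derive_unique.
  apply (is_derive_right_inverse (prim 1 q p) (kernel 1 q p) (sinh_pq p q) p_infty (G_pq p q Y));
    [| | lra].
  - intros y _ _; split; [apply is_derive_prim | apply kernel_gt0]; [exact hq | |]; apply admissible_1.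
  - intros x' hx'; destruct (sinh_pq_spec p q x' Y) as [hs e]; [exact hq | lra | exact hY | lra |].
    repeat split; assumption.
Qed.

Lemma mean_gt_of_lt p r s t x : 0 < x -> (p + r) * x < p * s + r * t ->
  p * s / x + r * t / x > p + r.
Proof.
  intros hx h; apply Rlt_gt, (Rmult_lt_reg_r x); [exact hx |].
  replace ((p * s / x + r * t / x) * x) with (p * s + r * t) by (field; lra); exact h.
Qed.

Theorem theorem3p3 (p q : R) (hq : 0 < q) (hp : q / (q + 1) < p) :
  let r := p * q / (p * q + p - q) in
  (forall x : R, 0 < x -> Rbar_lt (Finite x) (Rbar_mult (/ 2) (pi_pq p q)) ->
     p * sin_pq p q x / x + r * tam_pq p q x / x > p + r) /\
  (forall x : R, 0 < x -> Rbar_lt (Finite x) (Rbar_mult (/ 2) (pi_pq r q)) ->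
     p * sinh_pq p q x / x + r * tamh_pq p q x / x > p + r).
Proof.
  intros r.
  assert (hq1 : 0 < q / (q + 1)) by (apply Rdiv_lt_0_compat; lra).
  assert (hp0 : 0 < p) by lra.
  assert (hden : 0 < p * q + p - q).
  { replace (p * q + p - q) with ((p - q / (q + 1)) * (q + 1)) by (field; lra).
    apply Rmult_lt_0_compat; lra. }
  assert (hr : 0 < r) by (apply Rdiv_lt_0_compat; nra).
  assert (hpr : / p + / r = 1 + / q) by (unfold r; field; lra).
  split; intros x hx hX.
  - destruct (lt_half_pi_pq_lt_F_pq p q x hX) as [y0 [hy0 hxy]].
    destruct (sin_pq_spec p q x y0 hq hx hy0 (Rlt_le _ _ hxy)) as [hs hprim].
    assert (hadm : admissible (-1) q (sin_pq p q x))
      by (apply admissible_m1; [exact hq | rewrite Rabs_pos_eq; lra]).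
    unfold tam_pq; rewrite cos_pq_eq, div_rpow_inv_kernel by (assumption || lra).
    apply mean_gt_of_lt; [exact hx |]; rewrite <- hprim at 1.
    apply prim_lt_comb; (assumption || lra).
  - destruct (lt_half_pi_pq_lt_G_pq p q r x hq hp0 hpr hX) as [Y [hY hxY]].
    destruct (sinh_pq_spec p q x Y hq hx hY (Rlt_le _ _ hxY)) as [hs hprim].
    unfold tamh_pq; rewrite (cosh_pq_eq p q r), div_rpow_inv_kernel by (assumption || lra || apply admissible_1).
    apply mean_gt_of_lt; [exact hx |]; rewrite <- hprim at 1.
    apply prim_lt_comb; (assumption || lra || apply admissible_1).
Qed.
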